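(* In the disclosure game described in the context, for any information structure $(X,\pi^S)$ with $\varnothing\notin X$, an equilibrium exists, and in every equilibrium $(\sigma,(\mu^B_m))$ the distribution of Buyer's posterior mean $q^B_{\sigma(x)}$ (with $x$ distributed according to the signal distribution) equals $\mu^S$.
   Context: Let $0<q_\ell<q_h<\infty$, $Q=[q_\ell,q_h]$, and let $c$ be a real number with $0<c<q_\ell$. Let $F$ be a probability distribution on $[0,1]$ with support $[0,1]$ admitting a twice continuously differentiable density $f:(0,1)\to\mathbb{R}_{>0}$. Define $r(v)=(1-F(v))/f(v)$ and $\psi(v)=v-r(v)$ on $(0,1)$, and assume $\psi'(v)>0$ whenever $\psi(v)>0$. For $q\in Q$, $p(q)$ is the unique maximizer over $p\in\mathbb{R}$ of $(p-c)\big(1-F(p/q)\big)$, and let $R(q)=(p(q)-c)\big(1-F(p(q)/q)\big)$. The quality $q$ is drawn from a prior $\mu\in\Delta(Q)$ with support $Q$. Seller's information structure $(X,\pi^S)$ consists of a measurable signal space $X$ with $\varnothing\notin X$ and $\pi^S:Q\to\Delta(X)$; on observing $x$, Seller forms the Bayesian posterior $\mu^S_x$, and $\mu^S$ is the distribution of $\mathbb{E}_{\mu^S_x}[q]$. A disclosure strategy is a measurable $\sigma:X\to X\cup\{\varnothing\}$ with $\sigma(x)\in\{x,\varnothing\}$ for all $x$. Buyer's beliefs are $(\mu^B_m)_{m\in X\cup\{\varnothing\}}$ with posterior means $q^B_m=\mathbb{E}_{\mu^B_m}[q]$. A pair $(\sigma,(\mu^B_m))$ is an equilibrium if (i) for every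 $x\in X$, $\sigma(x)\in\arg\max_{m\in\{x,\varnothing\}} R(q^B_m)$; and (ii) $\mu^B_m=\mu^S_m$ for $m\in X$, and $\mu^B_\varnothing=\mathbb{E}[\mu^S_x\mid\sigma(x)=\varnothing]$ when this conditional expectation is well defined (otherwise $\mu^B_\varnothing$ is arbitrary). *)

From HB Require Import structures.
From mathcomp Require Import all_boot all_order all_algebra.
From mathcomp Require Import all_classical all_reals all_analysis.
Set Implicit Arguments. Unset Strict Implicit. Unset Printing Implicit Defensive.
Import Order.TTheory GRing.Theory Num.Theory.
Import numFieldNormedType.Exports.
Local Open Scope classical_set_scope.
Local Open Scope ring_scope.

Section Disclosure.
Context {R : realType}.

Definition rr (F f : R -> R) (v : R) : R := (1 - F v) / f v.
Definition psi (F f : R -> R) (v : R) : R := v - rr F f v.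

Definition profit (F : R -> R) (c q p : R) : R := (p - c) * (1 - F (p / q)).

Definition Rrev (F : R -> R) (c : R) (pf : R -> R) (q : R) : R :=
  profit F c q (pf q).

Definition pmean (P : {measure set R -> \bar R}) : R := fine (\int[P]_q (q%:E))%E.

Context {d : measure_display} {X : measurableType d}.

Definition signal_prob (mu : probability R R) (pi : R.-pker R ~> X)
  (B : set X) : \bar R := (\int[mu]_q pi q B)%E.

(* Bayesian posteriors: post is a version of the conditional distribution of
   q given x, i.e. for all measurable A, B:
   P(q in A, x in B) = int_{x in B} post x A dnu(x)  *)
Definition is_posterior (mu : probability R R) (pi : R.-pker R ~> X)
  (post : R.-pker X ~> R) : Prop :=
  forall (A : set R) (B : set X), measurable A -> measurable B ->
    (\int[mu]_(q in A) pi q B = \int[mu]_q \int[pi q]_(x in B) post x A)%E.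

(* A disclosure strategy sigma : X -> X u {empty} with sigma x in {x, empty}
   is represented by its (measurable) non-disclosure set N = sigma^-1(empty).
   Messages are [option X]: [Some x] = x, [None] = the empty message. *)
Definition sigma_of (N : set X) (x : X) : option X :=
  if `[< N x >] then None else Some x.

Definition qB (muB : option X -> probability R R) (m : option X) : R :=
  pmean (muB m).

Definition is_equilibrium (ql qh : R) (F : R -> R) (c : R) (pf : R -> R)
  (mu : probability R R) (pi : R.-pker R ~> X)
  (post : R.-pker X ~> R)
  (N : set X) (muB : option X -> probability R R) : Prop :=
  [/\ measurable N,
      (forall m, muB m `[ql, qh]%classic = 1%E) /\
      (forall x, N x ->
         Rrev F c pf (qB muB (Some x)) <= Rrev F c pf (qB muB None)),
      (forall x, ~ N x ->
         Rrev F c pf (qB muB None) <= Rrev F c pf (qB muB (Some x))),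
      (forall x, (muB (Some x) : set R -> \bar R) = post x) &
      ((0 < signal_prob mu pi N)%E ->
        forall A : set R, measurable A ->
          muB None A =
          ((\int[mu]_q \int[pi q]_(x in N) post x A) / signal_prob mu pi N)%E)].

End Disclosure.

(* The seller's revenue R(q) is strictly increasing on Q: at a higher quality
   q' she can charge the optimal price for q scaled by q'/q, which keeps the
   sale probability and raises the margin.  Hence full disclosure, with the
   skeptical belief that silence means quality ql, is an equilibrium; and in any
   equilibrium every withheld signal has posterior mean at most the buyer's
   mean q0 after silence.  By consistency q0 is the average of these posterior
   means over the withheld signals, so they all equal q0 almost surely: the
   buyer's posterior mean coincides almost surely with the seller's. *)

From HB Require Import structures.
From mathcomp Require Import all_boot all_order all_algebra.
From mathcomp Require Import all_classical all_reals all_analysis.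
From mathcomp Require Import measurable_realfun.
Set Implicit Arguments. Unset Strict Implicit. Unset Printing Implicit Defensive.
Import Order.TTheory GRing.Theory Num.Theory.
Import numFieldNormedType.Exports.
Local Open Scope classical_set_scope.
Local Open Scope ring_scope.

Lemma cdf_le1 (R : realType) (F f : R -> R) :
  (forall v : R, v <= 0 -> F v = 0) -> (forall v : R, 1 <= v -> F v = 1) ->
  (forall v : R, 0 <= v <= 1 ->
     (\int[@lebesgue_measure R]_(t in `[0%R, v]) (f t)%:E)%E = (F v)%:E) ->
  (forall v : R, 0 < v < 1 -> 0 < f v) ->
  (forall v : R, 0 < v < 1 -> derivable f v 1) ->
  forall v, F v <= 1.
Proof.
move=> F0 F1 Ff f_gt0 f_der v.
have [v_le0|v_gt0] := leP v 0; first by rewrite F0.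
have [v_ge1|v_lt1] := leP 1 v; first by rewrite F1.
have mf : measurable_fun (`]0, 1[ : set R) (EFin \o f).
  apply/measurable_EFinP; apply: open_continuous_measurable_fun.
    exact: interval_open.
  move=> x; rewrite inE /= in_itv /= => x01.
  exact/differentiable_continuous/derivable1_diffP/f_der.
have sub_v1 : `]0, v[ `<=` (`]0, 1[ : set R).
  by apply: subset_itvl; rewrite bnd_simp ltW.
rewrite -lee_fin -Ff ?(ltW v_gt0) ?(ltW v_lt1)// -(F1 1)// -Ff ?ler01 ?lexx//.
rewrite !(@integral_itv_bndoo _ _ _ _ true false)//; last exact: measurable_funS mf.
apply: ge0_subset_integral => // x; rewrite /= in_itv /= => x01.
by rewrite lee_fin ltW// f_gt0.
Qed.

Section revenue.
Variables (R : realType) (ql qh c : R) (F pf : R -> R).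
Hypotheses (c_gt0 : 0 < c) (c_lt_ql : c < ql).
Hypotheses (F1 : forall v, 1 <= v -> F v = 1) (F_le1 : forall v, F v <= 1).
Hypothesis pf_argmax : forall q, ql <= q <= qh ->
  forall p, p != pf q -> profit F c q p < profit F c q (pf q).

Lemma revenue_gt0 {q} : ql <= q <= qh -> 0 < Rrev F c pf q.
Proof.
move=> Qq; have c_lt_q : c < q by apply: lt_le_trans c_lt_ql (andP Qq).1.
have profit_c : profit F c q c = 0 by rewrite /profit subrr mul0r.
have profit_q : profit F c q q = 0.
  by rewrite /profit divff ?F1 ?subrr ?mulr0// gt_eqF// (lt_trans c_gt0).
have [pf_c|pf_c] := eqVneq (pf q) c.
- by rewrite -profit_q; apply: pf_argmax; rewrite // pf_c gt_eqF.
- by rewrite -profit_c; apply: pf_argmax; rewrite // eq_sym.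
Qed.

Lemma revenue_lt : {in `[ql, qh] &, {homo Rrev F c pf : q q' / q < q'}}.
Proof.
move=> q q'; rewrite !in_itv /= => Qq Qq' lt_qq'.
have q_gt0 : 0 < q by rewrite (lt_trans c_gt0)// (lt_le_trans c_lt_ql)// (andP Qq).1.
set p := pf q.
have sale_ge0 : 0 <= 1 - F (p / q) by rewrite subr_ge0.
have R_gt0 := revenue_gt0 Qq; rewrite /Rrev /profit -/p in R_gt0.
have sale_gt0 : 0 < 1 - F (p / q).
  rewrite lt_neqAle sale_ge0 andbT.
  by apply: contraTneq _ (R_gt0) => <-; rewrite mulr0 ltxx.
have margin_gt0 : 0 < p - c by move: R_gt0; rewrite pmulr_lgt0.
have p_gt0 : 0 < p by rewrite (lt_trans c_gt0)// -subr_gt0.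
have same_sale : p * q' / q / q' = p / q.
  by rewrite mulrAC mulfK// gt_eqF// (lt_trans q_gt0).
have higher_margin : p < p * q' / q by rewrite -mulrA ltr_pMr// ltr_pdivlMr// mul1r.
apply: (@lt_le_trans _ _ (profit F c q' (p * q' / q))).
  by rewrite /Rrev /profit -/p same_sale ltr_pM2r// ltrD2r.
have [->|ne] := eqVneq (p * q' / q) (pf q'); first exact: lexx.
exact/ltW/pf_argmax.
Qed.

End revenue.

Section mixture.
Local Open Scope ereal_scope.
Context d d' (Y : measurableType d) (Z : measurableType d') (R : realType).
Variables (m : {finite_measure set Y -> \bar R}) (k : R.-fker Y ~> Z).

Let kcst_m (_ : unit) : {measure set Y -> \bar R} := m.

Let measurable_kcst_m U : measurable U -> measurable_fun [set: unit] (kcst_m ^~ U).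
Proof. by move=> _; exact: measurable_cst. Qed.

HB.instance Definition _ := isKernel.Build _ _ _ _ R kcst_m measurable_kcst_m.

Let kcst_m_uub : measure_fam_uub kcst_m.
Proof.
exists (fine (m setT) + 1)%R => u.
by rewrite /kcst_m -[ltLHS]fineK ?fin_num_measure// lte_fin ltrDl.
Qed.

HB.instance Definition _ := Kernel_isFinite.Build _ _ _ _ R kcst_m kcst_m_uub.

Let k_snd (uy : unit * Y) : {measure set Z -> \bar R} := k uy.2.

Let measurable_k_snd U : measurable U -> measurable_fun [set: unit * Y] (k_snd ^~ U).
Proof. by move=> mU; exact: measurableT_comp (measurable_kernel k _ mU) _. Qed.

HB.instance Definition _ := isKernel.Build _ _ _ _ R k_snd measurable_k_snd.

Let k_snd_uub : measure_fam_uub k_snd.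
Proof. by have [r kr] := measure_uub k; exists r => -[u y]; exact: kr. Qed.

HB.instance Definition _ := Kernel_isFinite.Build _ _ _ _ R k_snd k_snd_uub.

(* Realised as the composition of two kernels that ignore their parameter,
   so that [integral_kcomp] applies. *)
Definition mixture : set Z -> \bar R := kcomp kcst_m k_snd tt.

HB.instance Definition _ := Measure.on mixture.

Lemma mixtureE U : mixture U = \int[m]_y k y U.
Proof. by []. Qed.

Lemma integral_mixture f : (forall z, 0 <= f z) -> measurable_fun [set: Z] f ->
  \int[mixture]_z f z = \int[m]_y \int[k y]_z f z.
Proof. exact: integral_kcomp. Qed.

Let mixture_fin : fin_num_fun mixture.
Proof.
move=> U mU; have [r kr] := measure_uub k.
rewrite ge0_fin_numE// (@le_lt_trans _ _ (\int[m]_y r%:E))//.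
  apply: ge0_le_integral => //; first exact: measurable_kernel.
  by move=> y _; rewrite (le_trans _ (ltW (kr y)))// le_measure// inE.
by rewrite integral_cst// ltey_eq fin_numM// fin_num_measure.
Qed.

HB.instance Definition _ := Measure_isFinite.Build _ _ _ mixture mixture_fin.

End mixture.

Section kernel_restriction.
Local Open Scope ereal_scope.
Context d d' (X : measurableType d) (Y : measurableType d') (R : realType).
Variables (k : R.-fker X ~> Y) (N : set X) (mN : measurable N).

Definition krestr of measurable N : X -> {measure set Y -> \bar R} :=
  fun x => if x \in N then k x else mzero.

Local Notation kN := (krestr mN).

Lemma krestrE x U : kN x U = ((k ^~ U) \_ N) x.
Proof. by rewrite /krestr patchE; case: ifP. Qed.

Lemma integral_krestr x f :
  \int[kN x]_y f y = ((fun x => \int[k x]_y f y) \_ N) x.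
Proof.
by rewrite /krestr patchE; case: ifP => // _; exact: integral_measure_zero.
Qed.

Let measurable_krestr U : measurable U -> measurable_fun [set: X] (kN ^~ U).
Proof.
move=> mU; rewrite (_ : kN ^~ U = (k ^~ U) \_ N); last first.
  by apply/funext => x; exact: krestrE.
exact/(measurable_restrictT _ _).1/measurable_funS/measurable_kernel.
Qed.

HB.instance Definition _ := isKernel.Build _ _ _ _ R kN measurable_krestr.

Let krestr_uub : measure_fam_uub kN.
Proof.
have [r kr] := measure_uub k; exists (Num.max r 1%R) => x.
rewrite krestrE patchE; case: ifP => _; last by rewrite lte_fin lt_max ltr01 orbT.
by rewrite (lt_le_trans (kr x))// lee_fin le_max lexx.
Qed.

HB.instance Definition _ := Kernel_isFinite.Build _ _ _ _ R kN krestr_uub.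

End kernel_restriction.

Section mean_on_interval.
Local Open Scope ereal_scope.
Context (R : realType) (a b : R).
Let I : set R := `[a, b]%classic.

(* The identity cut off outside [a, b]: nonnegative when 0 <= a, so that the
   Fubini-type lemmas apply, and a.e. equal to the identity for a measure
   carried by [a, b]. *)
Definition EFin_itv : R -> \bar R := EFin \_ I.

Lemma EFin_itv_ge0 : (0 <= a)%R -> forall q, 0 <= EFin_itv q.
Proof.
move=> a_ge0 q; rewrite /EFin_itv patchE; case: ifPn => // /set_mem /=.
by rewrite /I /= in_itv /= lee_fin => /andP[+ _]; exact: le_trans.
Qed.

Lemma measurable_EFin_itv : measurable_fun [set: R] EFin_itv.
Proof.
apply/(measurable_restrictT _ _).1; first exact: measurable_itv.
by apply: measurable_funTS; exact: EFin_measurable.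
Qed.

Variable P : {measure set R -> \bar R}.
Hypotheses (a_ge0 : (0 <= a)%R) (P1 : P setT = 1) (P_itv : P I = 1).

Let P_itvC : P (~` I) = 0.
Proof.
have mI : measurable I by exact: measurable_itv.
have PI_fin : P I \is a fin_num by rewrite P_itv.
rewrite -(subee (fin_numE 1 : 1 \is a fin_num)).
rewrite -[X in _ = X - _]P1 -[X in _ = _ - X]P_itv -(setvU I).
by rewrite measureU ?addeK ?setICl//; exact: measurableC.
Qed.

Let integral_EFin_itv : \int[P]_q q%:E = \int[P]_q EFin_itv q.
Proof.
apply: ae_eq_integral => //; first exact: measurable_EFin_itv.
exists (~` I); split; [apply: measurableC; exact: measurable_itv | exact: P_itvC |].
by move=> x /= + Ix; apply=> _; rewrite /EFin_itv patchE mem_set.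
Qed.

Let integral_EFin_itv_bounds : a%:E <= \int[P]_q EFin_itv q <= b%:E.
Proof.
have mI : measurable I by exact: measurable_itv.
have a_le x : I x -> (a <= x)%R by rewrite /I /= in_itv => /andP[].
have le_b x : I x -> (x <= b)%R by rewrite /I /= in_itv => /andP[].
rewrite /EFin_itv -integral_mkcond; apply/andP; split.
- by rewrite -[leLHS]mule1 -P_itv -integral_cst//; apply: ge0_le_integral.
- rewrite -[leRHS]mule1 -P_itv -integral_cst//; apply: ge0_le_integral => //.
  by move=> x /a_le xa; rewrite lee_fin (le_trans a_ge0 xa).
Qed.

Lemma pmeanE : (pmean P)%:E = \int[P]_q EFin_itv q.
Proof.
have /andP[a_le le_b] := integral_EFin_itv_bounds.
rewrite /pmean integral_EFin_itv fineK// fin_numElt (lt_le_trans _ a_le) ?ltNyr//.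
exact: le_lt_trans le_b (ltry _).
Qed.

Lemma pmean_itv : (a <= pmean P <= b)%R.
Proof. by rewrite -!lee_fin pmeanE integral_EFin_itv_bounds. Qed.

End mean_on_interval.

Lemma ae_eq_cst_of_integral d (T : measurableType d) (R : realType)
    (m : {finite_measure set T -> \bar R}) (N : set T) (g : T -> R) (c : R) :
  measurable N -> measurable_fun N g -> (forall x, N x -> 0 <= g x <= c) ->
  (\int[m]_(x in N) (g x)%:E = c%:E * m N)%E -> g = cst c %[ae m in N].
Proof.
move=> mN mg g_bnd int_g; pose h x := (c - g x)%:E.
have mh : measurable_fun N h.
  by apply/measurable_EFinP; apply: measurable_funB => //; exact: measurable_cst.
have h_ge0 x : N x -> (0 <= h x)%E.
  by move=> Nx; rewrite lee_fin subr_ge0; case/andP: (g_bnd x Nx).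
have g_ge0 x : N x -> (0 <= (g x)%:E)%E.
  by move=> Nx; rewrite lee_fin; case/andP: (g_bnd x Nx).
have int_h0 : (\int[m]_(x in N) `|h x| = 0)%E.
  have int_hg : (\int[m]_(x in N) h x + \int[m]_(x in N) (g x)%:E = c%:E * m N)%E.
    rewrite -ge0_integralD//; last exact/measurable_EFinP.
    by rewrite -integral_cst//; apply: eq_integral => x _; rewrite -EFinD subrK.
  rewrite int_g in int_hg.
  have cN_fin : (c%:E * m N)%E \is a fin_num by rewrite fin_numM// fin_num_measure.
  rewrite (eq_integral h) => [|x /set_mem Nx]; last by rewrite gee0_abs// h_ge0.
  by move/(congr1 (fun z => z - c%:E * m N)%E): int_hg; rewrite addeK// subee.
apply: filterS ((ae_eq_integral_abs m mN mh).1 int_h0) => x + Nx => /(_ Nx).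
by rewrite /h /= => -[] /eqP; rewrite subr_eq0 eq_sym => /eqP.
Qed.

Lemma measure_preimage_ae_eq d d' (T : measurableType d) (T' : measurableType d')
    (R : realType) (m : {measure set T -> \bar R}) (f g : T -> T') (A : set T') :
  measurable_fun [set: T] f -> measurable_fun [set: T] g -> f = g %[ae m] ->
  measurable A -> m (f @^-1` A) = m (g @^-1` A).
Proof.
move=> mf mg [Z [mZ mZ0 fgZ]] mA.
have fg x : ~ Z x -> f x = g x.
  by move=> Zx; apply: contrapT => fgx; apply: Zx; apply: fgZ => /(_ Logic.I).
have mfA : measurable (f @^-1` A) by rewrite -[_ @^-1` _]setTI; exact: mf.
have mgA : measurable (g @^-1` A) by rewrite -[_ @^-1` _]setTI; exact: mg.
rewrite -(measureU0 mfA mZ mZ0) -(measureU0 mgA mZ mZ0); congr (m _).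
apply/seteqP; split => x [Ax|Zx]; try by right.
- by have [Zx|/fg fgx] := pselect (Z x); [right | left; rewrite /preimage/= -fgx].
- by have [Zx|/fg fgx] := pselect (Z x); [right | left; rewrite /preimage/= fgx].
Qed.

Lemma measurable_fun_if_in d d' (T : measurableType d) (T' : measurableType d')
    (N : set T) (y : T') (f : T -> T') :
  measurable N -> measurable_fun [set: T] f ->
  measurable_fun [set: T] (fun x => if x \in N then y else f x).
Proof.
move=> mN mf; rewrite -(setUv N).
apply/measurable_funU => //; first exact: measurableC.
split.
- apply: (eq_measurable_fun (cst y)); last exact: measurable_cst.
  by move=> x /set_mem Nx /=; rewrite mem_set.
- apply: (eq_measurable_fun f); last exact: measurable_funTS.
  by move=> x /set_mem Nx /=; rewrite memNset.
Qed.

Section disclosure_game.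
Variables (R : realType) (ql qh c : R) (F pf : R -> R) (mu : probability R R).
Variables (d : measure_display) (X : measurableType d).
Variables (pi : R.-pker R ~> X) (post : R.-pker X ~> R).
Hypotheses (ql_gt0 : 0 < ql) (ql_le_qh : ql <= qh).
Hypothesis revenue_mono : {in `[ql, qh] &, {mono Rrev F c pf : q q' / q <= q'}}.
Hypothesis post_itv : forall x, post x `[ql, qh]%classic = 1%E.

(* [signal_prob mu pi] is convertible to this measure. *)
Local Notation nu := (mixture mu pi).

Let EFin_itvQ_ge0 q : (0 <= EFin_itv ql qh q)%E.
Proof. by apply: EFin_itv_ge0; exact: ltW. Qed.

Lemma pmean_post_itv x : ql <= pmean (post x) <= qh.
Proof. by apply: pmean_itv; [exact: ltW | exact: prob_kernel | exact: post_itv]. Qed.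

Lemma pmean_postE x : (pmean (post x))%:E = (\int[post x]_q EFin_itv ql qh q)%E.
Proof. by apply: pmeanE; [exact: ltW | exact: prob_kernel | exact: post_itv]. Qed.

Lemma measurable_pmean_post : measurable_fun [set: X] (fun x => pmean (post x)).
Proof.
apply/measurable_EFinP.
rewrite (_ : _ \o _ = fun x => \int[post x]_q EFin_itv ql qh q)%E; last first.
  by apply/funext => x; exact: pmean_postE.
apply: measurable_fun_integral_kernel => //; first exact: measurable_kernel.
exact: measurable_EFin_itv.
Qed.

(* The fallback [\d_ql] of [mnormalize] is never used: [post x] has mass 1. *)
Definition post_prob x : probability R R := mnormalize (post x) \d_ql.

Lemma post_probE x : post_prob x = post x :> (set R -> \bar R).
Proof.
apply/funext => A; rewrite /post_prob /= /mnormalize.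
have -> : post x setT = 1%E by exact: prob_kernel.
by rewrite onee_eq0 /= invr1 mule1.
Qed.

Definition full_disclosure_beliefs (m : option X) : probability R R :=
  if m is Some x then post_prob x else \d_ql.

Lemma full_disclosure_equilibrium :
  is_equilibrium ql qh F c pf mu pi post set0 full_disclosure_beliefs.
Proof.
have qB_silence : qB full_disclosure_beliefs None = ql.
  by rewrite /qB /pmean /= integral_dirac// diracT mul1e.
have qB_disclosed x : qB full_disclosure_beliefs (Some x) = pmean (post x).
  rewrite /qB /pmean /=; congr fine; apply: eq_measure_integral => A _ _.
  exact: (congr1 (fun m => m A) (post_probE x)).
have ql_in : ql \in `[ql, qh] by rewrite in_itv /= lexx ql_le_qh.
split => //.
- split => [[x|] /=|//].
  + by rewrite (congr1 (fun m => m _) (post_probE x)).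
  + by rewrite diracE mem_set.
- move=> x _; rewrite qB_silence qB_disclosed revenue_mono//.
    by case/andP: (pmean_post_itv x).
  by rewrite in_itv /= pmean_post_itv.
- exact: post_probE.
- have -> : signal_prob mu pi set0 = 0%E by exact: (measure0 nu).
  by rewrite ltxx.
Qed.

Section equilibrium.
Variables (N : set X) (muB : option X -> probability R R).
Hypothesis eqm : is_equilibrium ql qh F c pf mu pi post N muB.

Local Notation q0 := (qB muB None).

Let mN : measurable N. Proof. by case: eqm. Qed.

Let qB_disclosed x : qB muB (Some x) = pmean (post x).
Proof.
case: eqm => _ _ _ muB_post _; rewrite /qB /pmean; congr fine.
by apply: eq_measure_integral => A _ _; exact: (congr1 (fun m => m A) (muB_post x)).
Qed.

Let q0_itv : ql <= q0 <= qh.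
Proof.
case: eqm => _ [muB_itv _] _ _ _.
by apply: pmean_itv; [exact: ltW | exact: probability_setT | exact: muB_itv].
Qed.

Let pmean_post_le_q0 x : N x -> pmean (post x) <= q0.
Proof.
case: eqm => _ [_ silent] _ _ _ Nx.
rewrite -revenue_mono ?in_itv ?q0_itv ?pmean_post_itv//.
by rewrite -qB_disclosed; exact: silent.
Qed.

Local Notation kN := (krestr post mN).

Let mixture_krestr_post B : (0 < nu N)%E -> measurable B ->
  mixture nu kN B = (nu N * muB None B)%E.
Proof.
move=> nuN_gt0 mB.
rewrite mixtureE integral_mixture//; last exact: measurable_kernel.
under eq_integral => q _ do under eq_integral => x _ do rewrite krestrE.
under eq_integral => q _ do rewrite -integral_mkcond.
case: eqm => _ _ _ _ /(_ nuN_gt0 B mB) muB_B.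
rewrite -[X in (_ = _ * X)%E]/(muB None B) muB_B.
have nuN_fin : nu N \is a fin_num by exact: fin_num_measure.
set r := fine (nu N); have nuNE : nu N = r%:E by rewrite fineK.
have r_gt0 : 0 < r by rewrite -lte_fin -nuNE.
rewrite (_ : signal_prob mu pi N = r%:E); last exact: nuNE.
by rewrite nuNE inver gt_eqF// muleCA -EFinM mulfV ?gt_eqF// mule1.
Qed.

Let integral_mixture_krestr_post : (0 < nu N)%E ->
  (\int[mixture nu kN]_q EFin_itv ql qh q = nu N * q0%:E)%E.
Proof.
move=> nuN_gt0; have nuN_fin : nu N \is a fin_num by exact: fin_num_measure.
have r_ge0 : 0 <= fine (nu N) by rewrite fine_ge0// measure_ge0.
transitivity (\int[mscale (NngNum r_ge0) (muB None)]_q EFin_itv ql qh q)%E.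
  apply: eq_measure_integral => A mA _.
  transitivity (nu N * muB None A)%E; first exact: mixture_krestr_post.
  by rewrite -[in LHS](fineK nuN_fin).
rewrite ge0_integral_mscale//= ?(fineK nuN_fin); last exact: measurable_EFin_itv.
congr (_ * _)%E; apply/esym; case: eqm => _ [muB_itv _] _ _ _.
by apply: pmeanE; [exact: ltW | exact: probability_setT | exact: muB_itv].
Qed.

Let integral_krestr_post : (\int[nu]_x \int[kN x]_q EFin_itv ql qh q =
    \int[nu]_(x in N) (pmean (post x))%:E)%E.
Proof.
rewrite [RHS]integral_mkcond; apply: eq_integral => x _.
by rewrite integral_krestr !patchE; case: ifP => // _; exact/esym/pmean_postE.
Qed.

Lemma integral_pmean_post_silent :
  (\int[nu]_(x in N) (pmean (post x))%:E = q0%:E * nu N)%E.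
Proof.
have [nuN0|nuN_gt0] : nu N = 0%E \/ (0 < nu N)%E.
  by rewrite lt0e measure_ge0 andbT; case: eqP; [left|right].
  rewrite nuN0 mule0; apply: null_set_integral => //.
  exact/measurable_EFinP/measurable_funTS/measurable_pmean_post.
rewrite -integral_krestr_post -integral_mixture//; last exact: measurable_EFin_itv.
by rewrite integral_mixture_krestr_post// muleC.
Qed.

Lemma pmean_post_ae_silent : (fun x => pmean (post x)) = cst q0 %[ae nu in N].
Proof.
apply: ae_eq_cst_of_integral mN _ _ integral_pmean_post_silent.
  exact: measurable_funTS measurable_pmean_post.
move=> x Nx; rewrite pmean_post_le_q0 // andbT.
by case/andP: (pmean_post_itv x) => + _; exact: le_trans (ltW ql_gt0).
Qed.

Lemma qB_sigma_ae :
  (fun x => qB muB (sigma_of N x)) = (fun x => pmean (post x)) %[ae nu].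
Proof.
apply: filterS pmean_post_ae_silent => x pm_q0 _.
by rewrite /sigma_of; case: asboolP => [/pm_q0 ->|_]; last exact: qB_disclosed.
Qed.

Lemma measurable_qB_sigma : measurable_fun [set: X] (fun x => qB muB (sigma_of N x)).
Proof.
rewrite (_ : (fun x => _) = fun x => if x \in N then q0 else pmean (post x)).
  exact: measurable_fun_if_in mN measurable_pmean_post.
apply/funext => x; rewrite /sigma_of.
case: asboolP => [Nx|nNx]; first by rewrite mem_set.
by rewrite memNset//; exact: qB_disclosed.
Qed.

End equilibrium.
End disclosure_game.

Theorem proposition6 (R : realType) (ql qh c : R)
  (hql : 0 < ql) (hqlqh : ql < qh) (hc0 : 0 < c) (hcql : c < ql)
  (F f : R -> R)
  (* F is a distribution on [0,1] with support [0,1] and density f *)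
  (hF0 : forall v : R, v <= 0 -> F v = 0)
  (hF1 : forall v : R, 1 <= v -> F v = 1)
  (hFf : forall v : R, 0 <= v <= 1 ->
     (\int[@lebesgue_measure R]_(t in `[0%R, v]%classic) (f t)%:E)%E = (F v)%:E)
  (hfpos : forall v : R, 0 < v < 1 -> 0 < f v)
  (* f is twice continuously differentiable on (0,1) *)
  (hfC2 : forall v : R, 0 < v < 1 ->
     [/\ derivable f v 1, derivable (derive1 f) v 1 &
         {for v, continuous (derive1n 2 f)}])
  (* psi'(v) > 0 whenever psi(v) > 0 *)
  (hpsi : forall v : R, 0 < v < 1 -> 0 < psi F f v -> 0 < derive1 (psi F f) v)
  (* p(q) is the unique maximizer of (p - c)(1 - F(p/q)) *)
  (pf : R -> R)
  (hpf : forall q, ql <= q <= qh ->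
     forall p, p != pf q -> profit F c q p < profit F c q (pf q))
  (* prior on Q with support Q *)
  (mu : probability R R)
  (hmuQ : mu `[ql, qh]%classic = 1%E)
  (hmusupp : forall q e : R, ql <= q <= qh -> (0 < e)%R ->
     (0 < mu `](q - e)%R, (q + e)%R[%classic)%E)
  (* information structure (X, pi^S) *)
  (d : measure_display) (X : measurableType d)
  (pi : R.-pker R ~> X)
  (* Bayesian posteriors mu^S_x, beliefs over Q *)
  (post : R.-pker X ~> R)
  (hpostQ : forall x, post x `[ql, qh]%classic = 1%E)
  (hpost : is_posterior mu pi post) :
  (exists (N : set X) (muB : option X -> probability R R),
     is_equilibrium ql qh F c pf mu pi post N muB) /\
  (forall (N : set X) (muB : option X -> probability R R),
     is_equilibrium ql qh F c pf mu pi post N muB ->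
     forall A : set R, measurable A ->
       signal_prob mu pi ((fun x => qB muB (sigma_of N x)) @^-1` A) =
       signal_prob mu pi ((fun x => pmean (post x)) @^-1` A)).
Proof.
have f_der v : 0 < v < 1 -> derivable f v 1 by case/hfC2.
have F_le1 := cdf_le1 hF0 hF1 hFf hfpos f_der.
have Rmono : {in `[ql, qh] &, {mono Rrev F c pf : q q' / q <= q'}}.
  exact/le_mono_in/(revenue_lt hc0 hcql hF1 F_le1 hpf).
split.
  by exists set0, (full_disclosure_beliefs ql post);
    exact: full_disclosure_equilibrium (ltW hqlqh) Rmono hpostQ.
move=> N muB eqm A mA.
have := measure_preimage_ae_eq (measurable_qB_sigma hql hpostQ eqm)
  (measurable_pmean_post hql hpostQ) (qB_sigma_ae hql Rmono hpostQ eqm) mA.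
exact.
Qed.
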